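(* Let $m\ge 2$. For all $\lambda\in\mathbb{C}$ one has $(T^*_\lambda)^\vee=\underline{\omega}\,T^*_\lambda={}^sU^*_\lambda$ and $(U^*_\lambda)^\vee=\underline{\omega}\,U^*_\lambda=-\,{}^sT^*_\lambda$.
   Context: $\mathbb{R}_{0,m}$ is the real Clifford algebra generated by an orthonormal basis $e_1,\dots,e_m$ with $e_j^2=-1$, $e_ie_j=-e_je_i$ ($i\ne j$); $\underline{x}=\sum_je_jx_j$, $r=|\underline{x}|$, $\underline{\omega}=\underline{x}/r$, $\underline{\partial}=\sum_je_j\partial_{x_j}$, $a_m=2\pi^{m/2}/\Gamma(m/2)$, $\delta(\underline{x})$ the Dirac delta; distributions are (complexified) $\mathbb{R}_{0,m}$-valued. Signumdistributions: $\Omega(\mathbb{R}^m)=\{\underline{\omega}\varphi:\varphi\in\mathcal{D}(\mathbb{R}^m)\}$ with the topology transported from $\mathcal{D}(\mathbb{R}^m)$ by $\varphi\mapsto\underline{\omega}\varphi$; signumdistributions are the continuous linear functionals on $\Omega(\mathbb{R}^m)$. For a distribution $T$, $T^\vee=\underline{\omega}\,T$ is the signumdistribution with $\langle T^\vee,\underline{\omega}\varphi\rangle=-\langle T,\varphi\rangle$ for all $\varphi\in\mathcal{D}(\mathbb{R}^m)$; for any distribution $S$, $\underline{\omega}\,S$ means $S^\vee$ (e.g. $\underline{\omega}\,\underline{\partial}^k\delta(\underline{x}):=(\underline{\partial}^k\delta(\underline{x}))^\vee$). Finite part: for $\mu\notin\{-1,-2,\dots\}$, $\langle \mathrm{Fp}\,r_+^\mu,\phi\rangle=\lim_{\epsilon\to0+}\big(\int_\epsilon^\infty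 r^\mu\phi\,dr+\sum_{k=0}^{n-1}\frac{\phi^{(k)}(0)}{k!}\frac{\epsilon^{\mu+k+1}}{\mu+k+1}\big)$ ($\mathrm{Re}\,\mu>-n-1$); for $\mu=-n$ the monomial pseudofunction $\lim_{\epsilon\to0+}\big(\int_\epsilon^\infty r^{-n}\phi\,dr+\sum_{k=0}^{n-2}\frac{\phi^{(k)}(0)}{k!}\frac{\epsilon^{k-n+1}}{k-n+1}+\frac{\phi^{(n-1)}(0)}{(n-1)!}\ln\epsilon\big)$. Spherical means $\Sigma^0[\varphi](r)=\frac1{a_m}\int_{S^{m-1}}\varphi(r\underline{\omega})dS$, $\Sigma^1[\varphi](r)=\frac1{a_m}\int_{S^{m-1}}\underline{\omega}\varphi(r\underline{\omega})dS$. For all $\lambda\in\mathbb{C}$: distributions $\langle T_\lambda,\varphi\rangle=a_m\langle\mathrm{Fp}\,r_+^{\lambda+m-1},\Sigma^0[\varphi]\rangle$, $\langle U_\lambda,\varphi\rangle=a_m\langle\mathrm{Fp}\,r_+^{\lambda+m-1},\Sigma^1[\varphi]\rangle$; signumdistributions $\langle{}^sT_\lambda,\underline{\omega}\varphi\rangle=a_m\langle\mathrm{Fp}\,r_+^{\lambda+m-1},\Sigma^1[\varphi]\rangle$, $\langle{}^sU_\lambda,\underline{\omega}\varphi\rangle=-a_m\langle\mathrm{Fp}\,r_+^{\lambda+m-1},\Sigma^0[\varphi]\rangle$. Normalizations ($\ell\in\{0,1,\dots\}$): $T^*_\lambda=\pi^{\frac{\lambda+m}{2}}T_\lambda/\Gamma(\frac{\lambda+m}{2})$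 ($\lambda\ne-m-2\ell$), $T^*_{-m-2\ell}=\frac{\pi^{m/2-\ell}}{2^{2\ell}\Gamma(\frac m2+\ell)}\underline{\partial}^{2\ell}\delta(\underline{x})$; $U^*_\lambda=\pi^{\frac{\lambda+m+1}{2}}U_\lambda/\Gamma(\frac{\lambda+m+1}{2})$ ($\lambda\ne-m-2\ell-1$), $U^*_{-m-2\ell-1}=-\frac{\pi^{m/2-\ell}}{2^{2\ell+1}\Gamma(\frac m2+\ell+1)}\underline{\partial}^{2\ell+1}\delta(\underline{x})$; ${}^sT^*_\lambda=\pi^{\frac{\lambda+m+1}{2}}{}^sT_\lambda/\Gamma(\frac{\lambda+m+1}{2})$ ($\lambda\ne-m-2\ell-1$), ${}^sT^*_{-m-2\ell-1}=\frac{\pi^{m/2-\ell}}{2^{2\ell+1}\Gamma(\frac m2+\ell+1)}\underline{\omega}\,\underline{\partial}^{2\ell+1}\delta(\underline{x})$; ${}^sU^*_\lambda=\pi^{\frac{\lambda+m}{2}}{}^sU_\lambda/\Gamma(\frac{\lambda+m}{2})$ ($\lambda\ne-m-2\ell$), ${}^sU^*_{-m-2\ell}=\frac{\pi^{m/2-\ell}}{2^{2\ell}\Gamma(\frac m2+\ell)}\underline{\omega}\,\underline{\partial}^{2\ell}\delta(\underline{x})$. *)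

From HB Require Import structures.
From mathcomp Require Import all_boot all_order all_algebra.
From mathcomp Require Import all_classical all_reals all_analysis.
From mathcomp Require Import complex.
Import Order.TTheory GRing.Theory Num.Theory numFieldNormedType.Exports.

Set Implicit Arguments.
Unset Strict Implicit.
Unset Printing Implicit Defensive.

Local Open Scope classical_set_scope.
Local Open Scope ring_scope.
Local Open Scope complex_scope.

Section ComplexHelpers.
Variable R : realType.
Local Notation C := R[i].

(* r^z = exp(z ln r) for r > 0 and z complex *)
Definition cpow (r : R) (z : C) : C :=
  (expR (complex.Re z * ln r))%:C *
  (cos (complex.Im z * ln r) +i* sin (complex.Im z * ln r)).

Definition cint (D : set R) (g : R -> C) : C :=
  Rintegral (@lebesgue_measure R) D (fun x => complex.Re (g x)) +i*
  Rintegral (@lebesgue_measure R) D (fun x => complex.Im (g x)).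

Definition clim0 (g : R -> C) : C :=
  lim (complex.Re (g x) @[x --> 0^'+]) +i* lim (complex.Im (g x) @[x --> 0^'+]).

Definition cderivn (n : nat) (g : R -> C) (x : R) : C :=
  derive1n n (fun t => complex.Re (g t)) x +i*
  derive1n n (fun t => complex.Im (g t)) x.

(* Euler's Gamma function on C \ {0,-1,-2,...}:
   Gamma z = (int_0^oo t^(z+n-1) e^(-t) dt) / prod_(k<n) (z+k),
   for any n with Re z + n > 0 (here n = floor |Re z| + 1). *)
Definition cGamma (z : C) : C :=
  let n := (Num.truncn `|complex.Re z|).+1 in
  cint `]0, +oo[ (fun t => cpow t (z + n%:R - 1) * (expR (- t))%:C) /
  \prod_(k < n) (z + k%:R).

End ComplexHelpers.

Section Clifford.
Variable R : realType.
Variable m : nat.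
Local Notation C := R[i].

(* An element is the family of its coordinates on the blades e_A,
   A a subset of {1..m}, e_A = e_{a1} ... e_{ak} with a1 < ... < ak. *)
Local Notation clif := {ffun {set 'I_m} -> C}.

Definition blade (S : {set 'I_m}) : clif := [ffun T => (T == S)%:R].

(* e_A e_B = blade_sign A B e_{A symdiff B}   (e_j^2 = -1, e_i e_j = - e_j e_i) *)
Definition blade_sign (A B : {set 'I_m}) : C :=
  (-1) ^+ (#| [set p : 'I_m * 'I_m | (p.1 \in A) && (p.2 \in B) && (p.2 < p.1)%N] |
           + #|A :&: B|).

Definition clmul (x y : clif) : clif :=
  \sum_(A : {set 'I_m}) \sum_(B : {set 'I_m})
     (x A * y B * blade_sign A B) *: blade ((A :\: B) :|: (B :\: A)).

Definition cle (j : 'I_m) : clif := blade [set j].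

Definition clvec (x : 'rV[R]_m) : clif := \sum_(j < m) (x 0 j)%:C *: cle j.

Definition eucl (x : 'rV[R]_m) : R := Num.sqrt (\sum_(j < m) x 0 j ^+ 2).

(* underline omega = x / |x| (the value at the origin is irrelevant) *)
Definition omega (x : 'rV[R]_m) : clif := clvec ((eucl x)^-1 *: x).

Definition ej (i : 'I_m) : 'rV[R]_m := delta_mx 0 i.

Definition iter_partial (s : seq 'I_m) (f : 'rV[R]_m -> R) : 'rV[R]_m -> R :=
  foldr (fun i g => 'D_(ej i) g) f s.

Definition smooth_real (f : 'rV[R]_m -> R) : Prop :=
  forall s : seq 'I_m,
    continuous (iter_partial s f) /\
    forall (i : 'I_m) (x : 'rV[R]_m), derivable (iter_partial s f) x (ej i).

Definition is_test (phi : 'rV[R]_m -> clif) : Prop :=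
  (forall A : {set 'I_m},
      smooth_real (fun x => complex.Re (phi x A)) /\
      smooth_real (fun x => complex.Im (phi x A))) /\
  exists M : R, forall x, M < eucl x -> phi x = 0.

Definition cpartial (i : 'I_m) (phi : 'rV[R]_m -> clif) : 'rV[R]_m -> clif :=
  fun x => [ffun A =>
    'D_(ej i) (fun y => complex.Re (phi y A)) x +i*
    'D_(ej i) (fun y => complex.Im (phi y A)) x].

Definition distr := ('rV[R]_m -> clif) -> clif.

(* A signumdistribution S is given by phi |-> <S, omega phi>: since
   phi |-> omega phi is a bijection D(R^m) -> Omega(R^m) (and the topology
   of Omega is transported), this determines S. *)
Definition sdistr := ('rV[R]_m -> clif) -> clif.

Definition delta : distr := fun phi => phi 0.

Definition ddirac (T : distr) : distr :=
  fun phi => - \sum_(j < m) clmul (cle j) (T (cpartial j phi)).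

(* T^vee = omega T :  <T^vee, omega phi> = - <T, phi> *)
Definition vee (T : distr) : sdistr := fun phi => - T phi.

(* Lebesgue integral on R^m as iterated one-dimensional integrals *)
Definition int_coord (i : 'I_m) (f : 'rV[R]_m -> R) : 'rV[R]_m -> R :=
  fun x => Rintegral (@lebesgue_measure R) [set: R]
             (fun t => f (\row_k (if k == i then t else x 0 k))).

Definition int_Rm (f : 'rV[R]_m -> R) : R := foldr int_coord f (enum 'I_m) 0.

(* surface integral over S^{m-1}:  int_S g dS = m int_{|x|<=1} g(x/|x|) dx *)
Definition sph_int_R (g : 'rV[R]_m -> R) : R :=
  m%:R * int_Rm (fun x => if eucl x <= 1 then g ((eucl x)^-1 *: x) else 0).

Definition sph_int (h : 'rV[R]_m -> clif) : clif :=
  [ffun A => sph_int_R (fun w => complex.Re (h w A)) +i*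
             sph_int_R (fun w => complex.Im (h w A))].

Definition a_m : C := 2%:R * cpow pi (m%:R / 2) / cGamma (m%:R / 2).

Definition Sigma0 (phi : 'rV[R]_m -> clif) (r : R) : clif :=
  a_m^-1 *: sph_int (fun w => phi (r *: w)).
Definition Sigma1 (phi : 'rV[R]_m -> clif) (r : R) : clif :=
  a_m^-1 *: sph_int (fun w => clmul (clvec w) (phi (r *: w))).

Definition clim0c (F : R -> clif) : clif := [ffun A => clim0 (fun x => F x A)].
Definition cintc (D : set R) (F : R -> clif) : clif :=
  [ffun A => cint D (fun x => F x A)].
Definition cderivnc (n : nat) (F : R -> clif) (x : R) : clif :=
  [ffun A => cderivn n (fun r => F r A) x].

(* finite part <Fp r_+^mu, f> *)
Definition Fp (mu : C) (f : R -> clif) : clif :=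
  let n0 := Num.truncn (- complex.Re mu) in
  if (mu == - (n0%:R)) && (0 < n0)%N then
    (* mu = -n0, n0 >= 1: monomial pseudofunction *)
    clim0c (fun eps =>
      cintc `[eps, +oo[ (fun r => cpow r mu *: f r)
      + \sum_(k < n0.-1)
          ((k`!%:R)^-1 * cpow eps (k%:R - n0%:R + 1) / (k%:R - n0%:R + 1))
            *: cderivnc k f 0
      + (((n0.-1)`!%:R)^-1 * (ln eps)%:C) *: cderivnc n0.-1 f 0)
  else
    let n := (Num.truncn `|complex.Re mu|).+1 in   (* Re mu > -n-1 *)
    clim0c (fun eps =>
      cintc `[eps, +oo[ (fun r => cpow r mu *: f r)
      + \sum_(k < n)
          ((k`!%:R)^-1 * cpow eps (mu + k%:R + 1) / (mu + k%:R + 1))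
            *: cderivnc k f 0).

Definition Tl (lam : C) : distr :=
  fun phi => a_m *: Fp (lam + m%:R - 1) (Sigma0 phi).
Definition Ul (lam : C) : distr :=
  fun phi => a_m *: Fp (lam + m%:R - 1) (Sigma1 phi).
Definition sTl (lam : C) : sdistr :=
  fun phi => a_m *: Fp (lam + m%:R - 1) (Sigma1 phi).
Definition sUl (lam : C) : sdistr :=
  fun phi => - (a_m *: Fp (lam + m%:R - 1) (Sigma0 phi)).

(* Some l iff lam = -m-2l *)
Definition excT (lam : C) : option nat :=
  let l := ((Num.truncn (- complex.Re lam) - m)%N)./2 in
  if lam == - (((m + l.*2)%N)%:R) then Some l else None.
(* Some l iff lam = -m-2l-1 *)
Definition excU (lam : C) : option nat :=
  let l := ((Num.truncn (- complex.Re lam) - m.+1)%N)./2 in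
  if lam == - (((m + l.*2).+1)%N%:R) then Some l else None.

Definition Tstar (lam : C) : distr :=
  match excT lam with
  | Some l => fun phi =>
      (cpow pi (m%:R / 2 - l%:R) / (2 ^+ (l.*2) * cGamma (m%:R / 2 + l%:R)))
        *: iter l.*2 ddirac delta phi
  | None => fun phi =>
      (cpow pi ((lam + m%:R) / 2) / cGamma ((lam + m%:R) / 2)) *: Tl lam phi
  end.

Definition Ustar (lam : C) : distr :=
  match excU lam with
  | Some l => fun phi =>
      - ((cpow pi (m%:R / 2 - l%:R) /
           (2 ^+ (l.*2).+1 * cGamma (m%:R / 2 + l%:R + 1)))
        *: iter (l.*2).+1 ddirac delta phi)
  | None => fun phi =>
      (cpow pi ((lam + m%:R + 1) / 2) / cGamma ((lam + m%:R + 1) / 2))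
        *: Ul lam phi
  end.

Definition sTstar (lam : C) : sdistr :=
  match excU lam with
  | Some l => fun phi =>
      (cpow pi (m%:R / 2 - l%:R) /
         (2 ^+ (l.*2).+1 * cGamma (m%:R / 2 + l%:R + 1)))
        *: vee (iter (l.*2).+1 ddirac delta) phi
  | None => fun phi =>
      (cpow pi ((lam + m%:R + 1) / 2) / cGamma ((lam + m%:R + 1) / 2))
        *: sTl lam phi
  end.

Definition sUstar (lam : C) : sdistr :=
  match excT lam with
  | Some l => fun phi =>
      (cpow pi (m%:R / 2 - l%:R) / (2 ^+ (l.*2) * cGamma (m%:R / 2 + l%:R)))
        *: vee (iter l.*2 ddirac delta) phi
  | None => fun phi =>
      (cpow pi ((lam + m%:R) / 2) / cGamma ((lam + m%:R) / 2)) *: sUl lam phi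
  end.

Definition sdopp (S : sdistr) : sdistr := fun phi => - S phi.

End Clifford.

From HB Require Import structures.
From mathcomp Require Import all_boot all_order all_algebra.
From mathcomp Require Import all_classical all_reals all_analysis.
From mathcomp Require Import complex.
Import GRing.Theory.

Local Open Scope ring_scope.

(* Both identities hold by construction: multiplying by omega turns the
   radial pairing against Sigma0 (resp. Sigma1) into the signum pairing of
   sU (resp. sT), and at the exceptional exponents the normalised
   distributions are the same multiples of the iterated Dirac derivatives
   of delta on both sides.  Since vee is linear, the normalising constants
   pass through it. *)

Section Vee.
Variables (R : realType) (m : nat).
Local Notation clif := {ffun {set 'I_m} -> R[i]}.
Local Notation test := ('rV[R]_m -> clif).

Lemma veeZ (c : R[i]) (T : distr R m) (phi : test) :
  vee (fun psi => c *: T psi) phi = c *: vee T phi.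
Proof. by rewrite /vee scalerN. Qed.

Lemma veeN (T : distr R m) (phi : test) :
  vee (fun psi => - T psi) phi = - vee T phi.
Proof. by []. Qed.

Lemma vee_Tl (lam : R[i]) (phi : test) : vee (Tl lam) phi = sUl lam phi.
Proof. by []. Qed.

Lemma vee_Ul (lam : R[i]) (phi : test) :
  vee (Ul lam) phi = sdopp (sTl lam) phi.
Proof. by []. Qed.

Lemma vee_Tstar (lam : R[i]) (phi : test) :
  vee (Tstar lam) phi = sUstar lam phi.
Proof.
by rewrite /Tstar /sUstar; case: (excT m lam) => [l|]; rewrite veeZ ?vee_Tl.
Qed.

Lemma vee_Ustar (lam : R[i]) (phi : test) :
  vee (Ustar lam) phi = sdopp (sTstar lam) phi.
Proof.
rewrite /Ustar /sTstar /sdopp; case: (excU m lam) => [l|].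
- by rewrite veeN veeZ.
- by rewrite veeZ vee_Ul /sdopp scalerN.
Qed.

End Vee.

Theorem lemma2 (R : realType) (m : nat) (hm : (2 <= m)%N) (lam : R[i]) :
  (forall phi : 'rV[R]_m -> {ffun {set 'I_m} -> R[i]}, is_test phi ->
     vee (Tstar lam) phi = sUstar lam phi) /\
  (forall phi : 'rV[R]_m -> {ffun {set 'I_m} -> R[i]}, is_test phi ->
     vee (Ustar lam) phi = sdopp (sTstar lam) phi).
Proof. by split=> phi _; [exact: vee_Tstar | exact: vee_Ustar]. Qed.
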